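(* Let $(\alpha_k)_{k\ge1}$ be a sequence of real numbers with $\alpha_k>0$ for all $k\ge1$ such that $\sum_{k=1}^\infty\frac{\alpha_{k+1}^2}{\alpha_k}$ converges. Then $\sum_{k=1}^\infty\alpha_k$ converges. *)

From Stdlib Require Import Reals.
From Coquelicot Require Import Coquelicot.

(* By AM-GM, 2 a_{k+1} <= a_{k+1}^2 / a_k + a_k.  Summing over k <= n gives
   2 (S_{n+1} - a_1) <= B_n + S_n for the partial sums S of (a_k) and B of the
   given series, so S_{n+1} <= 2 a_1 + B_n is bounded; a series of positive
   terms with bounded partial sums converges. *)
From Stdlib Require Import Reals Lra.
From Coquelicot Require Import Coquelicot.
Open Scope R_scope.

Lemma double_le_sqr_div_add (a b : R) : 0 < a -> 2 * b <= b ^ 2 / a + a.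
Proof.
  intros Ha.
  assert (Hsq : 0 <= (b - a) ^ 2 / a).
  { apply Rdiv_le_0_compat; [apply pow2_ge_0 | exact Ha]. }
  replace ((b - a) ^ 2 / a) with (b ^ 2 / a + a - 2 * b) in Hsq by (field; lra).
  lra.
Qed.

Lemma sum_n_le_succ (a : nat -> R) :
  (forall n, 0 <= a n) -> forall n, sum_n a n <= sum_n a (S n).
Proof.
  intros Ha n. rewrite sum_Sn. unfold plus; simpl.
  specialize (Ha (S n)). lra.
Qed.

Lemma sum_n_le_Series (a : nat -> R) :
  (forall n, 0 <= a n) -> ex_series a -> forall n, sum_n a n <= Series a.
Proof.
  intros Ha Hex.
  apply is_lim_seq_incr_compare.
  - exact (Series_correct a Hex).
  - exact (sum_n_le_succ a Ha).
Qed.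

Lemma ex_series_nonneg_bounded (a : nat -> R) (M : R) :
  (forall n, 0 <= a n) -> (forall n, sum_n a n <= M) -> ex_series a.
Proof.
  intros Ha HM.
  destruct (ex_finite_lim_seq_incr (sum_n a) M (sum_n_le_succ a Ha) HM) as [l Hl].
  exists l. exact Hl.
Qed.

Lemma sum_n_le_of_double_succ_le (c b : nat -> R) :
  (forall n, 0 <= c n) -> (forall n, 2 * c (S n) <= b n + c n) ->
  forall n, sum_n c n <= 2 * c O + sum_n b n.
Proof.
  intros Hc Hstep.
  assert (Htele : forall n, sum_n c (S n) + c (S n) <= 2 * c O + sum_n b n).
  { induction n as [|n IH].
    - rewrite sum_Sn, !sum_O. unfold plus; simpl.
      specialize (Hstep O). lra.
    - rewrite (sum_Sn c (S n)), (sum_Sn b n). unfold plus; simpl in *.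
      specialize (Hstep (S n)). lra. }
  intros n.
  specialize (Htele n). pose proof (sum_n_le_succ c Hc n). specialize (Hc (S n)).
  lra.
Qed.

Theorem lemma6p1 (alpha : nat -> R)
  (Hpos : forall k : nat, (1 <= k)%nat -> 0 < alpha k)
  (Hconv : ex_series (fun n : nat => (alpha (S (S n)))^2 / alpha (S n))) :
  ex_series (fun n : nat => alpha (S n)).
Proof.
  set (c := fun n => alpha (S n)).
  set (b := fun n : nat => (alpha (S (S n)))^2 / alpha (S n)).
  assert (Hc : forall n, 0 < c n) by (intros n; apply Hpos; auto with arith).
  assert (Hb : forall n, 0 <= b n).
  { intros n. apply Rdiv_le_0_compat; [apply pow2_ge_0 | exact (Hc n)]. }
  apply (ex_series_nonneg_bounded c (2 * c O + Series b)).
  - intros n. left. exact (Hc n).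
  - intros n.
    apply Rle_trans with (2 * c O + sum_n b n).
    + apply sum_n_le_of_double_succ_le.
      * intros k. left. exact (Hc k).
      * intros k. exact (double_le_sqr_div_add (c k) (c (S k)) (Hc k)).
    + apply Rplus_le_compat_l, sum_n_le_Series; assumption.
Qed.
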